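(* Let $(\mathbb{P},\le,f)$ be a forcing property for $\mathcal{L}_A$. For all $p\in\mathbb{P}$ and $\varphi\in\mathcal{L}_A^s(C)$: (1) $F_p(\varphi)\in[0,1]$; (2) if $q\le p$ then $F_q(\varphi)\le F_p(\varphi)$; (3) $F_p(\varphi)+F_p(\neg\varphi)\ge1$.
   Context: $\mathcal{L}$ is a countable continuous signature; formulas of $\mathcal{L}_{\omega_1,\omega}$ are built from atomic formulas using $\neg$, $\tfrac12$, $\dotplus$, countable conjunctions $\bigwedge$ and $\inf_x$. $\mathcal{L}_A$ is a countable fragment, $C=\{c_i:i<\omega\}$ new constants, $\mathcal{L}_A(C)$ the smallest countable fragment of $\mathcal{L}_{\omega_1,\omega}(C)$ containing $\mathcal{L}_A$, $\mathcal{L}_A^s(C)$ its sentences, $\mathcal{L}_A^{as}(C)$ its atomic sentences, $\mathcal{T}(C)$ closed terms. A forcing property $(\mathbb{P},\le,f)$: poset with $f_p\colon\mathcal{L}_A^{as}(C)\to[0,1]$ such that (1) $p\le q\Rightarrow f_p\le f_q$; (2) for every $p$, $\varepsilon>0$, $\tau,\sigma\in\mathcal{T}(C)$, atomic $\varphi(x)$ there are $q\le p$, $c\in C$ with $f_q(d(\tau,c))<\varepsilon$, $f_q(d(\tau,\sigma))<f_p(d(\sigma,\tau))+\varepsilon$, and if $f_p(d(\tau,\sigma))<\delta_{\varphi,x}(\varepsilon)$ then $f_q(\varphi(\sigma))<f_p(\varphi(\tau))+\varepsilon$. $F_p$ on sentences: $F_p(\varphi)=f_p(\varphi)$ for atomic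 $\varphi$; $F_p(\neg\varphi)=1-\inf_{q\le p}F_q(\varphi)$; $F_p(\tfrac12\varphi)=\tfrac12F_p(\varphi)$; $F_p(\varphi\dotplus\psi)=\min(F_p(\varphi)+F_p(\psi),1)$; $F_p(\bigwedge\Phi)=\inf_{\varphi\in\Phi}F_p(\varphi)$; $F_p(\inf_x\varphi)=\inf_{c\in C}F_p(\varphi(c))$. *)

From HB Require Import structures.
From mathcomp Require Import all_boot all_order all_algebra.
From mathcomp Require Import boolp classical_sets reals.
Set Implicit Arguments. Unset Strict Implicit. Unset Printing Implicit Defensive.
Import Order.TTheory GRing.Theory Num.Theory.
Local Open Scope classical_set_scope.
Local Open Scope ring_scope.

(* A countable signature: function symbols (constants are 0-ary function
   symbols) and relation symbols with arities.  The metric symbol d is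
   built in (atom [adist]). *)
Record signature := Signature {
  Fsym : countType; farity : Fsym -> nat;
  Rsym : countType; rarity : Rsym -> nat }.

Section Syntax.
Local Unset Implicit Arguments.
Variable L : signature.

(* Terms of L(C): variables x_n, new constants c_n (n : nat), applications. *)
Inductive term : Type :=
| tvar of nat
| tcst of nat
| tfun (g : Fsym L) of ('I_(farity g) -> term).

Inductive atom : Type :=
| adist of term & term
| arel (r : Rsym L) of ('I_(rarity r) -> term).

Inductive formula : Type :=
| fatom of atom
| fneg of formula
| fhalf of formula
| fplus of formula & formula
| fconj of (nat -> formula)
| finf of nat & formula.

Fixpoint tfree (x : nat) (t : term) : Prop :=
  match t with
  | tvar n => n = x
  | tcst _ => False
  | tfun _ a => exists i, tfree x (a i)
  end.

Definition tclosed (t : term) : Prop := forall x, ~ tfree x t.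

Definition afree (x : nat) (a : atom) : Prop :=
  match a with
  | adist t1 t2 => tfree x t1 \/ tfree x t2
  | arel _ ts => exists i, tfree x (ts i)
  end.

Definition aclosed (a : atom) : Prop := forall x, ~ afree x a.

Fixpoint ffree (x : nat) (phi : formula) : Prop :=
  match phi with
  | fatom a => afree x a
  | fneg phi => ffree x phi
  | fhalf phi => ffree x phi
  | fplus phi psi => ffree x phi \/ ffree x psi
  | fconj Phi => exists n, ffree x (Phi n)
  | finf y phi => y <> x /\ ffree x phi
  end.

Definition sentence (phi : formula) : Prop := forall x, ~ ffree x phi.

Fixpoint tsubst (s : nat -> term) (t : term) : term :=
  match t with
  | tvar n => s n
  | tcst c => tcst c
  | tfun g a => tfun g (fun i => tsubst s (a i))
  end.

Definition asubst (s : nat -> term) (a : atom) : atom :=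
  match a with
  | adist t1 t2 => adist (tsubst s t1) (tsubst s t2)
  | arel r ts => arel r (fun i => tsubst s (ts i))
  end.

Definition upd (s : nat -> term) (x : nat) (t : term) : nat -> term :=
  fun n => if n == x then t else s n.

End Syntax.

Arguments tvar {L}.
Arguments tfree {L}.
Arguments tclosed {L}.
Arguments afree {L}.
Arguments aclosed {L}.
Arguments ffree {L}.
Arguments sentence {L}.
Arguments tsubst {L}.
Arguments asubst {L}.
Arguments upd {L}.
Arguments fatom {L}.
Arguments fneg {L}.
Arguments fhalf {L}.
Arguments fplus {L}.
Arguments fconj {L}.
Arguments finf {L}.
Arguments adist {L}.

Arguments tcst {L}.
Arguments tfun {L} g _.
Arguments arel {L} r _.

Section Forcing.
Variables (R : realType) (L : signature) (P : Type) (le : P -> P -> Prop)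
  (f : P -> atom L -> R).

(* Forcing property (P, <=, f); [delta a x] is the modulus of uniform
   continuity delta_{phi,x} of the atomic formula phi = a in the variable x. *)
Definition forcing_property (delta : atom L -> nat -> R -> R) : Prop :=
  [/\
      [/\ (forall p, le p p),
          (forall p q, le p q -> le q p -> p = q) &
          (forall p q r, le p q -> le q r -> le p r)],
      (forall p a, aclosed a -> 0 <= f p a <= 1),
      (forall p q a, aclosed a -> le p q -> f p a <= f q a) &
      (forall p (eps : R), 0 < eps ->
       forall tau sigma : term L, tclosed tau -> tclosed sigma ->
       forall (a : atom L) (x : nat), (forall y, afree y a -> y = x) ->
       exists q c, [/\ le q p,
         f q (adist tau (tcst c)) < eps,
         f q (adist tau sigma) < f p (adist sigma tau) + eps &
         (f p (adist tau sigma) < delta a x eps ->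
          f q (asubst (upd tvar x sigma) a)
            < f p (asubst (upd tvar x tau) a) + eps)])].

(* F_p(phi) computed under a substitution s of terms for the variables;
   inf_x phi is handled by substituting each new constant c for x, so that
   Fs s (finf x phi) p = inf_c F_p(phi(c)). *)
Fixpoint Fs (s : nat -> term L) (phi : formula L) (p : P) : R :=
  match phi with
  | fatom a => f p (asubst s a)
  | fneg phi => 1 - inf [set Fs s phi q | q in [set q | le q p]]
  | fhalf phi => Fs s phi p / 2
  | fplus phi psi => Num.min (Fs s phi p + Fs s psi p) 1
  | fconj Phi => inf [set Fs s (Phi n) p | n in [set: nat]]
  | finf x phi => inf [set Fs (upd s x (tcst c)) phi p | c in [set: nat]]
  end.

Definition F (phi : formula L) (p : P) : R := Fs tvar phi p.

End Forcing.

From HB Require Import structures.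
From mathcomp Require Import all_boot all_order all_algebra.
From mathcomp Require Import boolp classical_sets reals.
Import Order.TTheory GRing.Theory Num.Theory.
Local Open Scope classical_set_scope.
Local Open Scope ring_scope.

(* By induction on the formula, simultaneously for all closing substitutions:
   atoms inherit [0,1]-bounds and monotonicity from f; 1/2, +. and the infima
   of conjunctions and inf_x preserve both properties pointwise; and
   F_q(~phi) = 1 - inf_{r <= q} F_r(phi) grows as q shrinks because the infimum
   is then taken over a smaller set.  Finally F_p(phi) >= inf_{q <= p} F_q(phi)
   since p <= p, which is exactly F_p(phi) + F_p(~phi) >= 1. *)

Section InfImage.
Local Set Implicit Arguments.
Local Unset Strict Implicit.
Variables (R : realType) (T : Type) (g : T -> R).

Lemma inf_image_le (A : set T) a :
  (forall b, A b -> 0 <= g b) -> A a -> inf [set g b | b in A] <= g a.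
Proof.
move=> g_ge0 Aa; apply: ge_inf; last by exists a.
by exists 0 => _ [b Ab <-]; exact: g_ge0.
Qed.

Lemma inf_image_in01 (A : set T) :
  A !=set0 -> (forall a, A a -> 0 <= g a <= 1) -> 0 <= inf [set g a | a in A] <= 1.
Proof.
move=> [a Aa] g01; have g_ge0 b : A b -> 0 <= g b by move=> Ab; case/andP: (g01 b Ab).
apply/andP; split.
  by apply: lb_le_inf => [|_ [b Ab <-]]; [exists (g a), a | exact: g_ge0].
apply: le_trans (inf_image_le g_ge0 Aa) _; by case/andP: (g01 a Aa).
Qed.

Lemma le_inf_image (h : T -> R) (A : set T) :
  A !=set0 -> (forall a, A a -> 0 <= g a) -> (forall a, A a -> g a <= h a) ->
  inf [set g a | a in A] <= inf [set h a | a in A].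
Proof.
move=> [a Aa] g_ge0 le_gh; apply: lb_le_inf; first by exists (h a), a.
by move=> _ [b Ab <-]; apply: le_trans (le_gh b Ab); exact: inf_image_le.
Qed.

Lemma inf_image_subset (A B : set T) :
  B `<=` A -> B !=set0 -> (forall a, A a -> 0 <= g a) ->
  inf [set g a | a in A] <= inf [set g b | b in B].
Proof.
move=> BA [b Bb] g_ge0; apply: lb_le_inf; first by exists (g b), b.
by move=> _ [c Bc <-]; apply: inf_image_le => //; exact: BA.
Qed.

End InfImage.

Section ClosedSubst.
Local Set Implicit Arguments.
Local Unset Strict Implicit.
Variable L : signature.

Lemma tclosed_tsubst (s : nat -> term L) (t : term L) :
  (forall x, tfree x t -> tclosed (s x)) -> tclosed (tsubst s t).
Proof.
elim: t => [n|c|g ts IH] s_cl x //=; first exact: s_cl.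
by case=> i; apply: (IH i) => y yi; apply: s_cl; exists i.
Qed.

Lemma aclosed_asubst (s : nat -> term L) (a : atom L) :
  (forall x, afree x a -> tclosed (s x)) -> aclosed (asubst s a).
Proof.
case: a => [t1 t2|r ts] s_cl x /=.
  by case; apply: tclosed_tsubst => y y_free; apply: s_cl; [left|right].
by case=> i; apply: tclosed_tsubst => y y_free; apply: s_cl; exists i.
Qed.

End ClosedSubst.

Section ForcingValues.
Local Set Implicit Arguments.
Local Unset Strict Implicit.
Variables (R : realType) (L : signature) (P : Type) (le : P -> P -> Prop)
  (f : P -> atom L -> R).
Hypotheses (refl_le : forall p, le p p)
  (trans_le : forall p q r, le p q -> le q r -> le p r)
  (f_in01 : forall p a, aclosed a -> 0 <= f p a <= 1)
  (f_antimono : forall p q a, aclosed a -> le p q -> f p a <= f q a).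

Local Notation Fs := (Fs le f).

Lemma Fs_in01_antimono (phi : formula L) (s : nat -> term L) :
  (forall x, ffree x phi -> tclosed (s x)) ->
  forall p, 0 <= Fs s phi p <= 1 /\ (forall q, le q p -> Fs s phi q <= Fs s phi p).
Proof.
elim: phi s => [a|phi IH|phi IH|phi IH psi IH'|Phi IH|y phi IH] s s_cl p /=.
- have a_cl := aclosed_asubst s_cl.
  by split=> [|q]; [exact: f_in01 | exact: f_antimono].
- have ge0 q : 0 <= Fs s phi q by case/andP: (IH s s_cl q).1.
  have inf01 : 0 <= inf [set Fs s phi q | q in [set q | le q p]] <= 1.
    by apply: inf_image_in01 => [|q _]; [exists p; exact: refl_le | exact: (IH s s_cl q).1].
  split=> [|q qp].
    by case/andP: inf01 => ge0' le1; rewrite subr_ge0 lerBlDr lerDl ge0' le1.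
  rewrite lerD2l lerN2; apply: inf_image_subset => //.
    by move=> r rq; exact: trans_le qp.
  by exists q.
- have [/andP[ge0 le1] mono] := IH s s_cl p.
  split=> [|q qp]; last by rewrite ler_pM2r ?invr_gt0 ?mono.
  by rewrite divr_ge0 //= ler_pdivrMr // mul1r (le_trans le1) ?ler1n.
- have [/andP[ge0 _] mono] := IH s (fun x h => s_cl x (or_introl h)) p.
  have [/andP[ge0' _] mono'] := IH' s (fun x h => s_cl x (or_intror h)) p.
  split=> [|q qp]; first by rewrite le_min addr_ge0 // ler01 ge_min lexx orbT.
  by rewrite le_min !ge_min lexx !orbT andbT lerD ?mono ?mono'.
- have IHn n := IH n s (fun x h => s_cl x (ex_intro _ n h)).
  split=> [|q qp]; first exact: inf_image_in01 (fun n _ => (IHn n p).1).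
  apply: le_inf_image => [|n _|n _]; [by exists 0%N | | exact: (IHn n p).2].
  by case/andP: (IHn n q).1.
- have IHc c : forall r, 0 <= Fs (upd s y (tcst c)) phi r <= 1 /\
      (forall q, le q r -> Fs (upd s y (tcst c)) phi q <= Fs (upd s y (tcst c)) phi r).
    apply: IH => x x_free; rewrite /upd; case: eqP => [_ z //|x_ne_y].
    by apply: s_cl; split=> // y_eq; apply: x_ne_y.
  split=> [|q qp]; first exact: inf_image_in01 (fun c _ => (IHc c p).1).
  apply: le_inf_image => [|c _|c _]; [by exists 0%N | | exact: (IHc c p).2].
  by case/andP: (IHc c q).1.
Qed.

Lemma Fs_add_neg_ge1 (phi : formula L) (s : nat -> term L) p :
  (forall q, le q p -> 0 <= Fs s phi q) -> 1 <= Fs s phi p + Fs s (fneg phi) p.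
Proof.
move=> ge0; rewrite /= addrCA lerDl subr_ge0.
by apply: inf_image_le => //; exact: refl_le.
Qed.

End ForcingValues.

Theorem lemma2p5 (R : realType) (L : signature) (P : Type)
  (le : P -> P -> Prop) (f : P -> atom L -> R)
  (delta : atom L -> nat -> R -> R) :
  forcing_property le f delta ->
  forall (p : P) (phi : formula L), sentence phi ->
    [/\ 0 <= F le f phi p <= 1,
        (forall q, le q p -> F le f phi q <= F le f phi p) &
        1 <= F le f phi p + F le f (fneg phi) p].
Proof.
case=> [[refl_le _ trans_le] f_in01 f_antimono _] p phi phi_sentence.
have id_cl x : ffree x phi -> tclosed (tvar x : term L).
  by move/phi_sentence.
have values := Fs_in01_antimono refl_le trans_le f_in01 f_antimono id_cl.
have [in01 antimono] := values p.
split=> //; apply: (Fs_add_neg_ge1 refl_le) => q _.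
by case/andP: (values q).1.
Qed.
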